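(* Fix an integer $b\ge2$, $\gamma\in(0,1)$, let $\phi$ be a real analytic $\mathbb{Z}$-periodic function satisfying condition (H), and assume $\alpha<\min\{1,\frac{\log b}{\log(1/\gamma)}\}$. Then for any $\mathbf{v},\mathbf{w}\in\Lambda^{\#}$ there exist $\mathbf{i}\neq\mathbf{j}\in\Sigma$ and $x_{\mathbf{v},\mathbf{w}}\in I_{\mathbf{v}}$ such that $S'(x_{\mathbf{v},\mathbf{w}},\mathbf{w}\mathbf{i})-S'(x_{\mathbf{v},\mathbf{w}},\mathbf{w}\mathbf{j})\neq0$.
   Context: $\Lambda=\{0,\dots,b-1\}$, $\Lambda^{\#}=\bigcup_{n\ge1}\Lambda^n$, $\Sigma=\Lambda^{\mathbb{Z}_+}$, $\nu$ uniform on $\Lambda$; $\mathbf{w}\mathbf{i}$ denotes concatenation. $S(x,\mathbf{j})=\sum_{n\ge1}\gamma^{n-1}\phi\big(\frac{x+j_1+j_2b+\cdots+j_nb^{n-1}}{b^n}\big)$, $S'$ its $x$-derivative. Condition (H): for all $\mathbf{i}\neq\mathbf{j}\in\Sigma$, $x\mapsto S(x,\mathbf{j})-S(x,\mathbf{i})$ is not identically zero. $\alpha$ is the constant such that for Lebesgue-a.e. $x$ the image $m_x$ of $\nu^{\mathbb{Z}_+}$ under $\mathbf{j}\mapsto S(x,\mathbf{j})$ is exact dimensional with dimension $\alpha$. For $\mathbf{v}=v_1\cdots v_n$, $I_{\mathbf{v}}=\big[\frac{v_1+v_2b+\cdots+v_nb^{n-1}}{b^n},\frac{1+v_1+v_2b+\cdots+v_nb^{n-1}}{b^n}\big)$.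 *)

From HB Require Import structures.
From mathcomp Require Import all_boot all_order all_algebra.
From mathcomp Require Import all_classical all_reals all_analysis.
Set Implicit Arguments. Unset Strict Implicit. Unset Printing Implicit Defensive.
Import Order.TTheory GRing.Theory Num.Theory.
Import numFieldNormedType.Exports.
Local Open Scope classical_set_scope.
Local Open Scope ring_scope.

(* Sigma = Lambda^{Z_+}, Lambda = {0,...,b-1}; index k : nat stands for j_{k+1}.
   Finite words (elements of Lambda^#) are seq 'I_b of positive size. *)

Definition wconcat (b : nat) (w : seq 'I_b) (i : nat -> 'I_b) : nat -> 'I_b :=
  fun k => nth (i (k - size w)%N) w k.

Definition cyl (b : nat) (v : seq 'I_b) : set (nat -> 'I_b) :=
  [set j | [seq j k | k <- iota 0 (size v)] = v].

(* the Bernoulli (uniform product) measure nu^{Z_+}, as the outer measure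
   obtained from cylinder covers (Caratheodory construction) *)
Definition bernoulli_outer (R : realType) (b : nat) (E : set (nat -> 'I_b))
  : \bar R :=
  ereal_inf [set (\sum_(0 <= k <oo) (((b%:R : R) ^- (size (u k)))%:E))%E
            | u in [set u : nat -> seq 'I_b | E `<=` \bigcup_k cyl (u k)]].

Definition wval (R : realType) (b : nat) (v : seq 'I_b) : R :=
  \sum_(m < size v) ((nth 0%N (map val v) m)%:R * (b%:R) ^+ m).

Definition Iv (R : realType) (b : nat) (v : seq 'I_b) : set R :=
  [set x | wval R v / (b%:R) ^+ (size v) <= x < (1 + wval R v) / (b%:R) ^+ (size v)].

Definition S (R : realType) (b : nat) (gamma : R) (phi : R -> R)
  (x : R) (j : nat -> 'I_b) : R :=
  limn (series (fun n => gamma ^+ n *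
     phi ((x + \sum_(m < n.+1) ((j m : nat)%:R * (b%:R) ^+ m)) / (b%:R) ^+ n.+1))).

Arguments S {R} b gamma phi x j.

Definition S' (R : realType) (b : nat) (gamma : R) (phi : R -> R)
  (x : R) (j : nat -> 'I_b) : R :=
  derive1 (fun t : R => S b gamma phi t j) x.

Arguments S' {R} b gamma phi x j.

Definition condH (R : realType) (b : nat) (gamma : R) (phi : R -> R) : Prop :=
  forall i j : nat -> 'I_b, i <> j ->
    ~ (forall x, S b gamma phi x j - S b gamma phi x i = 0).

Arguments condH {R} b gamma phi.

Definition real_analytic (R : realType) (f : R -> R) : Prop :=
  forall x0 : R, exists2 r : R, 0 < r &
    exists a : nat -> R, forall x : R, `|x - x0| < r ->
      series (fun n => a n * (x - x0) ^+ n) @ \oo --> f x.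

Definition Zperiodic (R : realType) (f : R -> R) : Prop :=
  forall x : R, f (x + 1) = f x.

Definition mx (R : realType) (b : nat) (gamma : R) (phi : R -> R) (x : R)
  (A : set R) : \bar R :=
  bernoulli_outer R (fun j => A (S b gamma phi x j)).

Arguments mx {R} b gamma phi x A.

Definition exact_dimensional (R : realType) (m : set R -> \bar R) (a : R) : Prop :=
  m [set y | ~ ((fun r : R => ln (fine (m (ball y r))) / ln r) @ 0^'+ --> a)]
  = 0%E.

(* Differentiating term by term,
     S'(x, j) = b^-1 sum_n (gamma/b)^n phi'((x + j_1 + ... + j_(n+1) b^n) / b^(n+1)),
   so that S'(x, a j) = phi'((x + a)/b)/b + (gamma/b) S'((x + a)/b, j).  Call y
   rigid when S'(y, .) is constant on Sigma.  If the conclusion failed at some x,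
   peeling off the letters of w would produce a rigid point y.  Prepending the
   letter 0 shows that y/b is rigid, and since x |-> x + 1 acts on Sigma as the
   b-adic odometer (a bijection), so are y + 1 and y - 1; hence every (y + m)/b^k
   is rigid and, S' being Lipschitz in x, so is every point.  Then
   D(x) = S(x, 0 0 0 ...) - S(x, 1 0 0 ...) has zero derivative, while
   S(x, 1 0 0 ...) = S(x + 1, 0 0 0 ...): the bounded function S(., 0 0 0 ...)
   has constant unit-step increments D, so D = 0, against (H). *)

From HB Require Import structures.
From mathcomp Require Import all_boot all_order all_algebra.
From mathcomp Require Import all_classical all_reals all_analysis.
From mathcomp Require Import ring lra zify.
Set Implicit Arguments. Unset Strict Implicit. Unset Printing Implicit Defensive.
Import Order.TTheory GRing.Theory Num.Theory.
Import numFieldNormedType.Exports.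
Local Open Scope classical_set_scope.
Local Open Scope ring_scope.

Section RealAnalysis.
Variable R : realType.
Implicit Types (f : R -> R) (x y : R).

Lemma natr_mul_expr_le (q : R) n : 0 <= q < 1 -> n%:R * q ^+ n <= (1 - q)^-1.
Proof.
move=> /andP[q0 q1].
have -> : n%:R * q ^+ n = \sum_(i < n) q ^+ n by rewrite sumr_const card_ord mulr_natl.
apply: (@le_trans _ _ (\sum_(i < n) q ^+ i)).
  by apply: ler_sum => i _; apply: ler_wiXn2l => //; [exact: ltW | exact: ltnW].
rewrite -[leRHS]div1r ler_pdivlMr ?subr_gt0 //.
have -> : (\sum_(i < n) q ^+ i) * (1 - q) = 1 - q ^+ n.
  by rewrite mulrC -[1 - q]opprB mulNr -subrX1 opprB.
by rewrite lerBlDr lerDl exprn_ge0.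
Qed.

Lemma series_geometric_le (u : R^nat) (A q : R) : 0 <= A -> 0 <= q < 1 ->
  (forall n, `|u n| <= A * q ^+ n) ->
  cvgn (series u) /\ `|limn (series u)| <= A / (1 - q).
Proof.
move=> A0 /andP[q0 q1] hu.
have q1' : `|q| < 1 by rewrite ger0_norm.
have gc : cvgn (series (geometric A q)) by exact: is_cvg_geometric_series.
have nc : cvgn [normed series u].
  apply: (series_le_cvg _ _ _ gc) => n /=.
  - exact: normr_ge0.
  - by rewrite mulr_ge0 // exprn_ge0.
  - exact: hu.
split; first exact: normed_cvg.
apply: (le_trans (lim_series_norm nc)).
rewrite -(cvg_lim _ (cvg_geometric_series (a := A) q1')) //.
apply: ler_lim => //.
by near=> n; apply: ler_sum => i _; exact: hu.
Unshelve. all: by end_near.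
Qed.

Lemma geometric_lt (C q e : R) : 0 <= q < 1 -> 0 < e -> exists k, C * q ^+ k < e.
Proof.
move=> /andP[q0 q1] e0.
have q1' : `|q| < 1 by rewrite ger0_norm.
have /cvgrPdist_lt /(_ e e0) [N _ hN] := cvg_geometric C q1'.
exists N; have := hN N (leqnn N); rewrite /= sub0r normrN.
exact: le_lt_trans (ler_norm _).
Qed.

(* Dominate by the geometric series of ratio [p = r1 / rho], where [r1] is the
   midpoint of [z] and [rho]: the extra factor [n (z / r1) ^ n] stays bounded. *)
Lemma is_cvg_pseries_diffs (c : R^nat) (rho z : R) : 0 <= z < rho ->
  cvgn (pseries c rho) -> cvgn (pseries (pseries_diffs c) z).
Proof.
move=> /andP[z0 zr] Cx.
have rho0 : 0 < rho by apply: le_lt_trans zr.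
have [K [_ Kf]] := cvg_series_bounded Cx.
set M := `|K| + 1.
have KM : K < M by rewrite /M (le_lt_trans (ler_norm K)) // ltrDl.
have Mb n : `|c n * rho ^+ n| <= M by apply: (Kf M KM).
have M0 : 0 <= M by rewrite /M addr_ge0.
set r1 := (z + rho) / 2; set q := z / r1; set p := r1 / rho.
have r10 : 0 < r1 by rewrite /r1; lra.
have q0 : 0 <= q by rewrite divr_ge0 // ltW.
have q1 : q < 1 by rewrite ltr_pdivrMr // mul1r /r1; lra.
have p0 : 0 < p by rewrite divr_gt0.
have p1 : p < 1 by rewrite ltr_pdivrMr // mul1r /r1; lra.
apply: normed_cvg.
apply: (@series_le_cvg _ _ (geometric (M / rho * (1 + (1 - q)^-1)) p)) => [n|n|n|].
- exact: normr_ge0.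
- rewrite /= !mulr_ge0 ?invr_ge0 ?(ltW rho0) ?exprn_ge0 ?(ltW p0) //.
  by rewrite addr_ge0 // invr_ge0 subr_ge0 ltW.
- rewrite /= /pseries_diffs normrM normrM normr_nat normrX (ger0_norm z0).
  have cn : `|c n.+1| <= M / rho ^+ n.+1.
    rewrite ler_pdivlMr ?exprn_gt0 //.
    by have := Mb n.+1; rewrite normrM normrX (gtr0_norm rho0).
  have zn : z ^+ n = rho ^+ n * (q ^+ n * p ^+ n).
    by rewrite -!exprMn; congr (_ ^+ _); rewrite /q /p; field; rewrite !gt_eqF.
  have nq : n.+1%:R * q ^+ n <= 1 + (1 - q)^-1.
    rewrite -addn1 natrD mulrDl mul1r addrC lerD ?natr_mul_expr_le ?q0 //.
    by rewrite exprn_ile1 // ltW.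
  apply: (@le_trans _ _ (n.+1%:R * (M / rho ^+ n.+1) * z ^+ n)).
    by rewrite ler_wpM2r ?exprn_ge0 // ler_wpM2l.
  have -> : n.+1%:R * (M / rho ^+ n.+1) * z ^+ n
     = M / rho * (n.+1%:R * q ^+ n) * p ^+ n.
    by rewrite zn exprSr; field; rewrite gt_eqF // expf_neq0 // gt_eqF.
  by rewrite ler_wpM2r ?exprn_ge0 ?(ltW p0) // ler_wpM2l // divr_ge0 // ltW.
- by apply: is_cvg_geometric_series; rewrite gtr0_norm.
Qed.

Lemma pseries_is_derive (a : R^nat) (r t : R) :
  (forall s, `|s| < r -> cvgn (pseries a s)) -> `|t| < r ->
  cvgn (pseries (pseries_diffs a) t) /\
  is_derive t (1 : R) (fun s => limn (pseries a s)) (limn (pseries (pseries_diffs a) t)).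
Proof.
move=> ha tr; set K := (3 * `|t| + r) / 4; set rho := (`|t| + r) / 2.
have t0 := normr_ge0 t.
have K0 : 0 <= K by rewrite /K; lra.
have tK : `|t| < `|K| by rewrite (ger0_norm K0) /K; lra.
have rho0 : 0 <= rho by rewrite /rho; lra.
have Ca : cvgn (pseries a rho) by apply: ha; rewrite (ger0_norm rho0) /rho; lra.
have C1 : cvgn (pseries (pseries_diffs a) K).
  by apply: is_cvg_pseries_diffs Ca; rewrite /K /rho; lra.
have C2 : cvgn (pseries (pseries_diffs (pseries_diffs a)) K).
  apply: (@is_cvg_pseries_diffs _ ((K + rho) / 2)); first by rewrite /K /rho; lra.
  by apply: is_cvg_pseries_diffs Ca; rewrite /K /rho; lra.
split; first exact: is_cvg_pseries_inside C1 tK.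
have CaK : cvgn (pseries a K) by apply: ha; rewrite (ger0_norm K0) /K; lra.
exact: pseries_snd_diffs CaK C1 C2 tK.
Qed.

Lemma is_derive_shift f x k d :
  is_derive (x + k) (1 : R) f d -> is_derive x (1 : R) (fun u => f (u + k)) d.
Proof.
case=> df <-.
have E : (fun h : R => h^-1 *: ((fun u => f (u + k)) (h *: (1 : R) + x) - f (x + k)))
       = (fun h => h^-1 *: (f (h *: 1 + (x + k)) - f (x + k))).
  by apply/funext => h; rewrite /= addrA.
by apply: DeriveDef; [rewrite /derivable E | rewrite /derive E].
Qed.

Lemma derive1_val f x d : is_derive x (1 : R) f d -> derive1 f x = d.
Proof. by move=> fd; rewrite derive1E; exact: derive_val. Qed.

Lemma pseries_expansion_is_derive f x0 r (a : R^nat) :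
  (forall x, `|x - x0| < r -> pseries a (x - x0) @ \oo --> f x) ->
  forall x, `|x - x0| < r ->
  cvgn (pseries (pseries_diffs a) (x - x0)) /\
  is_derive x (1 : R) f (limn (pseries (pseries_diffs a) (x - x0))).
Proof.
move=> ha x xr.
have cv s : `|s| < r -> cvgn (pseries a s).
  move=> sr; apply/cvg_ex; exists (f (s + x0)).
  by have := ha (s + x0); rewrite addrK; apply.
have [cd dg] := pseries_is_derive cv xr.
split => //.
apply: (@near_eq_is_derive _ _ _ (fun u => limn (pseries a (u - x0)))).
  have e0 : 0 < r - `|x - x0| by rewrite subr_gt0.
  near=> u; apply: cvg_lim => //; apply: ha.
  have : `|u - x| < r - `|x - x0|.
    near: u; apply/nbhs_normP; exists (r - `|x - x0|) => //= y.
    by rewrite /ball_ /= distrC; exact: id.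
  have := ler_normD (u - x) (x - x0); rewrite addrA subrK; lra.
exact: is_derive_shift.
Unshelve. all: by end_near.
Qed.

Lemma real_analytic_is_derive f :
  real_analytic f -> forall x, is_derive x (1 : R) f (derive1 f x).
Proof.
move=> fa x; have [r r0 [a ha]] := fa x.
have xx : `|x - x| < r by rewrite subrr normr0.
have [_ fd] := pseries_expansion_is_derive ha xx.
by rewrite (derive1_val fd).
Qed.

Lemma real_analytic_continuous f : real_analytic f -> continuous f.
Proof.
move=> fa x; have [fd _] := real_analytic_is_derive fa x.
exact/differentiable_continuous/derivable1_diffP.
Qed.

Lemma real_analytic_derive1 f : real_analytic f -> real_analytic (derive1 f).
Proof.
move=> fa x0; have [r r0 [a ha]] := fa x0.
exists r => //; exists (pseries_diffs a) => x xr.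
have [cd fd] := pseries_expansion_is_derive ha xr.
by rewrite (derive1_val fd); exact: cvgP cd.
Qed.

Lemma lipschitz_bounded_derive f f' K : (forall y, is_derive y (1 : R) f (f' y)) ->
  (forall y, `|f' y| <= K) -> forall u v, `|f u - f v| <= K * `|u - v|.
Proof.
move=> fd f'K.
suff H u v : u <= v -> `|f u - f v| <= K * `|u - v|.
  move=> u v; have [/H //|/ltW vu] := leP u v.
  by rewrite distrC (distrC u); exact: H.
move=> uv; have fc : continuous f.
  by move=> x; have [d _] := fd x; exact/differentiable_continuous/derivable1_diffP.
have [w _ E] := MVT_segment uv (fun x _ => fd x) (continuous_subspaceT fc).
rewrite distrC E (distrC u) normrM (ger0_norm (x := v - u)) ?subr_ge0 //.
by rewrite ler_wpM2r ?subr_ge0.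
Qed.

Lemma near_dnbhs0_divr (a : R) (P : R -> Prop) : 0 < a ->
  (\forall d \near 0^', P d) -> \forall h \near 0^', P (h / a).
Proof.
move=> a0 /nbhs_normP [r /= r0 hr]; apply/nbhs_normP; exists (r * a) => /=.
  exact: mulr_gt0.
move=> y; rewrite /ball_ /= !sub0r !normrN => hy yn0; apply: hr.
  by rewrite /ball_ /= sub0r normrN normrM normfV (gtr0_norm a0) ltr_pdivrMr.
by rewrite mulf_neq0 // invr_eq0 gt_eqF.
Qed.

Lemma int_shift_closed (P : R -> Prop) :
  (forall y, P y -> P (y + 1)) -> (forall y, P y -> P (y - 1)) ->
  forall (k : int) y, P y -> P (y + k%:~R).
Proof.
move=> Pu Pd [n|n] y Py.
  rewrite -pmulrn; elim: n => [|n IH]; first by rewrite addr0.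
  by rewrite -natr1 addrA; exact: Pu.
rewrite NegzE mulrNz -pmulrn; elim: n => [|n IH]; first exact: Pd.
by rewrite -natr1 opprD addrA; exact: Pd.
Qed.

Lemma Zperiodic_int f : Zperiodic f -> forall (k : int) x, f (x + k%:~R) = f x.
Proof.
move=> fp k x; apply: (int_shift_closed (P := fun y => f y = f x)) => // y <-.
  exact: fp.
by rewrite -[in RHS](subrK 1 y) fp.
Qed.

Lemma Zperiodic_bounded f : continuous f -> Zperiodic f ->
  exists M, forall x, `|f x| <= M.
Proof.
move=> fc fp.
have [c _ hc] := @EVT_max _ (fun x => `|f x|) 0 1 ler01
  (continuous_subspaceT (fun x => continuous_comp (fc x) (@norm_continuous _ _ _))).
exists `|f c| => x; rewrite -(Zperiodic_int fp (- Num.floor x)) intrN.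
apply: hc; have /andP[x0 x1] := floor_itv x.
by rewrite in_itv /= subr_ge0 x0 lerBlDl; move: x1; rewrite intrD; lra.
Qed.

Lemma Zperiodic_derive1 f : Zperiodic f -> Zperiodic (derive1 f).
Proof.
by move=> fp x; rewrite /derive1 fp; under eq_fun do rewrite addrA fp.
Qed.

Lemma bounded_constant_step_eq0 (F : R -> R) (M c : R) :
  (forall x, `|F x| <= M) -> (forall x, F x - F (x + 1) = c) -> c = 0.
Proof.
move=> FM Fc; apply/eqP/negPn/negP => c0.
have telescope n : F 0 - F n%:R = n%:R * c.
  elim: n => [|n IH]; first by rewrite subrr mul0r.
  by rewrite -natr1 mulrDl mul1r -IH -(Fc n%:R); ring.
have cpos : 0 < `|c| by rewrite normr_gt0.
have := truncnS_gt (2 * M / `|c|); rewrite ltr_pdivrMr // ltNge => /negP; apply.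
rewrite -normr_nat -normrM -telescope (le_trans (ler_normB _ _)) //.
by have := FM 0; have := FM (Num.truncn (2 * M / `|c|)).+1%:R; lra.
Qed.

Lemma floor_shift_approx (t y a : R) : 0 < a ->
  exists m : int, 0 <= t - (y + m%:~R) / a < a^-1.
Proof.
move=> a0; exists (Num.floor (t * a - y)).
have /andP[f1 f2] := floor_itv (t * a - y).
have -> : t - (y + (Num.floor (t * a - y))%:~R) / a =
    (t * a - y - (Num.floor (t * a - y))%:~R) / a by field; rewrite gt_eqF.
rewrite divr_ge0 ?subr_ge0 ?(ltW a0) //= ltr_pdivrMr // mulVf ?gt_eqF //.
by move: f2; rewrite intrD; lra.
Qed.

End RealAnalysis.

Section Digits.
Local Open Scope nat_scope.
Variable b : nat.
Hypothesis b_gt1 : 1 < b.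
Implicit Types (i : nat -> 'I_b) (m n : nat).

Let b_gt0 : 0 < b. Proof. exact: ltnW. Qed.

Let val_insubd_modb (d : 'I_b) n : val (insubd d (n %% b)) = n %% b.
Proof. by rewrite val_insubd ltn_pmod. Qed.

Definition all_max_digits i m := \big[andb/true]_(k < m) ((i k : nat) == b.-1).
Definition all_zero_digits i m := \big[andb/true]_(k < m) ((i k : nat) == 0).

Lemma all_max_digitsS i m :
  all_max_digits i m.+1 = all_max_digits i m && ((i m : nat) == b.-1).
Proof. by rewrite /all_max_digits big_ord_recr. Qed.

Lemma all_zero_digitsS i m :
  all_zero_digits i m.+1 = all_zero_digits i m && ((i m : nat) == 0).
Proof. by rewrite /all_zero_digits big_ord_recr. Qed.

Definition odometer i : nat -> 'I_b :=
  fun m => if all_max_digits i m then insubd (i m) ((i m).+1 %% b) else i m.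

Definition odometer_pred i : nat -> 'I_b :=
  fun m => if all_zero_digits i m then insubd (i m) ((i m + b.-1) %% b) else i m.

Definition nat_prefix_value n i := \sum_(m < n.+1) i m * b ^ m.

Lemma nat_prefix_valueS n i :
  nat_prefix_value n.+1 i = nat_prefix_value n i + i n.+1 * b ^ n.+1.
Proof. by rewrite /nat_prefix_value big_ord_recr. Qed.

Lemma nat_prefix_value_odometer n i :
  nat_prefix_value n (odometer i) + all_max_digits i n.+1 * b ^ n.+1 =
  nat_prefix_value n i + 1.
Proof.
have bP := prednK b_gt0.
elim: n => [|n IH].
  rewrite /nat_prefix_value !big_ord1 /odometer all_max_digitsS /all_max_digits.
  rewrite !big_ord0 /= expn0 expn1 !muln1 val_insubd_modb.
  have := ltn_ord (i 0); case: eqP => [->|ne] ib.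
    by rewrite bP modnn mul1n add0n addn1 bP.
  have il : (i 0).+1 < b by lia.
  by rewrite modn_small ?mul0n ?addn0 ?addn1.
rewrite nat_prefix_valueS [nat_prefix_value n.+1 i]nat_prefix_valueS.
rewrite all_max_digitsS /odometer.
move: IH; rewrite /odometer; case: (all_max_digits i n.+1) => /= IH; last first.
  by rewrite mul0n addn0 in IH *; lia.
rewrite val_insubd_modb.
have := ltn_ord (i n.+1); case: eqP => [ei|ne] ib.
  rewrite ei bP modnn mul0n addn0 mul1n expnS.
  have : b.-1 * b ^ n.+1 + b ^ n.+1 = b * b ^ n.+1 by rewrite addnC -mulSn bP.
  lia.
have il : (i n.+1).+1 < b by lia.
rewrite modn_small // mul0n addn0 mulSn; lia.
Qed.

Let pred_modb v : v < b -> (v + b.-1) %% b = if v is v'.+1 then v' else b.-1.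
Proof.
case: v => [|v] vb; first by rewrite add0n modn_small // ltn_predL.
rewrite (_ : v.+1 + b.-1 = v + b); last by lia.
by rewrite modnDr modn_small //; lia.
Qed.

Let all_max_digits_pred i m : all_max_digits (odometer_pred i) m = all_zero_digits i m.
Proof.
elim: m => [|m IH]; first by rewrite /all_max_digits /all_zero_digits !big_ord0.
rewrite all_max_digitsS all_zero_digitsS IH /odometer_pred.
case: (all_zero_digits i m) => //=.
rewrite val_insubd_modb pred_modb //.
by have := ltn_ord (i m); case: (i m : nat) => [|v] vb; rewrite ?eqxx //; lia.
Qed.

Lemma odometer_predK : cancel odometer_pred odometer.
Proof.
move=> i; apply/funext => m; apply: val_inj.
rewrite /odometer all_max_digits_pred /odometer_pred.
case: (all_zero_digits i m) => //=.
rewrite !val_insubd_modb pred_modb //.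
have := ltn_ord (i m); case: (i m : nat) => [|v] vb; first by rewrite prednK ?modnn.
by rewrite modn_small.
Qed.

Definition dcons (a : 'I_b) (s : nat -> 'I_b) : nat -> 'I_b :=
  fun m => if m is m'.+1 then s m' else a.

Lemma dcons_eta (j : nat -> 'I_b) : dcons (j 0) (fun m => j m.+1) = j.
Proof. by apply/funext => -[]. Qed.

Lemma wconcat_nil i : wconcat [::] i = i.
Proof. by apply/funext => k; rewrite /wconcat nth_nil subn0. Qed.

Lemma wconcat_cons (a : 'I_b) w i : wconcat (a :: w) i = dcons a (wconcat w i).
Proof. by apply/funext => -[|k] //; rewrite /wconcat /= subSS. Qed.

End Digits.

Section DigitSeries.
Variables (R : realType) (b : nat).
Hypothesis b_gt1 : (1 < b)%N.
Local Notation B := (b%:R : R).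

Lemma natb_gt1 : 1 < B. Proof. by rewrite ltr1n. Qed.
Lemma natb_gt0 : 0 < B. Proof. exact: lt_trans ltr01 natb_gt1. Qed.
Lemma natb_neq0 : B != 0. Proof. by rewrite gt_eqF // natb_gt0. Qed.

Lemma divB_itv (c : R) : 0 <= c < 1 -> 0 <= c / B < 1.
Proof.
move=> /andP[c0 c1]; rewrite divr_ge0 ?(ltW natb_gt0) //= ltr_pdivrMr ?natb_gt0 //.
by rewrite (lt_trans c1) // mul1r natb_gt1.
Qed.

Definition prefix_value (n : nat) (j : nat -> 'I_b) : R :=
  \sum_(m < n.+1) ((j m : nat)%:R * B ^+ m).

Definition digit_series (psi : R -> R) (c x : R) (j : nat -> 'I_b) : R :=
  limn (series (fun n => c ^+ n * psi ((x + prefix_value n j) / B ^+ n.+1))).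

Lemma prefix_value_dcons a s n :
  prefix_value n.+1 (dcons a s) = (a : nat)%:R + B * prefix_value n s.
Proof.
rewrite /prefix_value big_ord_recl /= expr0 mulr1 mulr_sumr; congr (_ + _).
by apply: eq_bigr => i _; rewrite /bump /= add1n exprS mulrCA.
Qed.

Lemma prefix_value0_dcons a s : prefix_value 0 (dcons a s) = (a : nat)%:R.
Proof. by rewrite /prefix_value big_ord1 /= expr0 mulr1. Qed.

Lemma prefix_value_natr n (i : nat -> 'I_b) :
  prefix_value n i = (nat_prefix_value n i)%:R.
Proof. by rewrite natr_sum; apply: eq_bigr => k _; rewrite natrM natrX. Qed.

Lemma digit_series_add1 (psi : R -> R) (c x : R) (i : nat -> 'I_b) :
  Zperiodic psi -> digit_series psi c (x + 1) i = digit_series psi c x (odometer i).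
Proof.
move=> psi1; rewrite /digit_series; congr (limn (series _)).
apply/funext => n; congr (_ * _).
have Bn : B ^+ n.+1 != 0 by rewrite expf_neq0 // natb_neq0.
have := congr1 (fun m : nat => (m%:R : R)) (nat_prefix_value_odometer b_gt1 n i).
rewrite /= !natrD natrM natrX -!prefix_value_natr => E.
have -> : (x + prefix_value n (odometer i)) / B ^+ n.+1 =
    (x + 1 + prefix_value n i) / B ^+ n.+1 - (all_max_digits i n.+1)%:R.
  apply: (mulIf Bn); rewrite mulrBl !divfK //.
  by move: E; case: (all_max_digits i n.+1) => /= E; lra.
case: (all_max_digits i n.+1); last by rewrite subr0.
by rewrite -[in LHS](subrK 1 ((x + 1 + prefix_value n i) / B ^+ n.+1)) psi1.
Qed.

Section Bounded.
Variables (psi : R -> R) (c M : R).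
Hypotheses (psi_le : forall y, `|psi y| <= M) (c_itv : 0 <= c < 1).

Let c_ge0 : 0 <= c. Proof. by case/andP: c_itv. Qed.

Let digit_series_geometric x j :
  cvgn (series (fun n => c ^+ n * psi ((x + prefix_value n j) / B ^+ n.+1))) /\
  `|digit_series psi c x j| <= M / (1 - c).
Proof.
apply: series_geometric_le (le_trans (normr_ge0 _) (psi_le 0)) c_itv _ => n.
by rewrite normrM normrX ger0_norm // mulrC ler_wpM2r // exprn_ge0.
Qed.

Lemma digit_series_le x j : `|digit_series psi c x j| <= M / (1 - c).
Proof. by have [] := digit_series_geometric x j. Qed.

Lemma digit_series_dcons x a s :
  digit_series psi c x (dcons a s) =
  psi ((x + (a : nat)%:R) / B) + c * digit_series psi c ((x + (a : nat)%:R) / B) s.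
Proof.
set y := (x + _) / B; have [cv _] := digit_series_geometric y s.
rewrite /digit_series; apply: cvg_lim => //; rewrite -cvg_shiftS /=.
set v := (fun n => _) in cv.
have -> : (fun n => series (fun k => c ^+ k *
      psi ((x + prefix_value k (dcons a s)) / B ^+ k.+1)) n.+1) =
    (fun n => psi y + c * series v n).
  apply/funext => n; rewrite /series /= big_nat_recl //.
  rewrite expr0 mul1r prefix_value0_dcons expr1 -/y mulr_sumr; congr (_ + _).
  apply: eq_bigr => i _; rewrite /v exprS -mulrA; congr (_ * (_ * psi _)).
  by rewrite prefix_value_dcons /y exprS; field; rewrite natb_neq0 expf_neq0 // natb_neq0.
by apply: cvgD; [exact: cvg_cst | exact: cvgMl_tmp].
Qed.

Lemma digit_series_lipschitz K : 0 <= K ->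
  (forall u v, `|psi u - psi v| <= K * `|u - v|) -> forall u v j,
  `|digit_series psi c u j - digit_series psi c v j| <= K / B / (1 - c / B) * `|u - v|.
Proof.
move=> K0 psiK u v j.
have [cu _] := digit_series_geometric u j; have [cv _] := digit_series_geometric v j.
rewrite /digit_series -lim_seriesB // mulrAC.
apply: (series_geometric_le _ (divB_itv c_itv) _).2.
  by rewrite !mulr_ge0 // invr_ge0 ltW // natb_gt0.
move=> n /=; rewrite -mulrBr normrM normrX ger0_norm //.
apply: (le_trans (ler_wpM2l (exprn_ge0 _ c_ge0) (psiK _ _))).
have -> : (u + prefix_value n j) / B ^+ n.+1 - (v + prefix_value n j) / B ^+ n.+1
    = (u - v) / B ^+ n.+1 by field; rewrite expf_neq0 // natb_neq0.
rewrite normrM normfV normrX (gtr0_norm natb_gt0) exprS expr_div_n.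
by rewrite le_eqVlt; apply/orP; left; apply/eqP; field; rewrite expf_neq0 // natb_neq0.
Qed.

End Bounded.

Section Derivative.
Variables (psi psi' : R -> R) (c M M' : R).
Hypotheses (psi_le : forall y, `|psi y| <= M) (psi'_le : forall y, `|psi' y| <= M').
Hypothesis psi_der : forall y, is_derive y (1 : R) psi (psi' y).
Hypothesis c_itv : 0 <= c < 1.

Local Notation Sp := (digit_series psi c).
Local Notation dSp := (digit_series (fun u => psi' u / B) (c / B)).
Local Notation q := (c / B).
Local Notation L := (M' / B / (1 - c / B)).

Let q_itv : 0 <= q < 1. Proof. exact: divB_itv. Qed.
Let q_ge0 : 0 <= q. Proof. by case/andP: q_itv. Qed.

Let psi'B_le y : `|psi' y / B| <= M' / B.
Proof. by rewrite normrM normfV (gtr0_norm natb_gt0) ler_pM2r ?invr_gt0 ?natb_gt0. Qed.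

Let M'_ge0 : 0 <= M'. Proof. exact: le_trans (normr_ge0 _) (psi'_le 0). Qed.

Let Sp_lipschitz u v j : `|Sp u j - Sp v j| <= L * `|u - v|.
Proof.
apply: (digit_series_lipschitz psi_le c_itv M'_ge0).
exact: lipschitz_bounded_derive psi_der psi'_le.
Qed.

Lemma digit_series_quotient_dcons x h (a : 'I_b) s : h != 0 ->
  let y := (x + (a : nat)%:R) / B in
  h^-1 * (Sp (h + x) (dcons a s) - Sp x (dcons a s)) - dSp x (dcons a s) =
  ((h / B)^-1 * (psi (h / B + y) - psi y) - psi' y) / B +
  q * ((h / B)^-1 * (Sp (h / B + y) s - Sp y s) - dSp y s).
Proof.
move=> hn0 y.
rewrite !(digit_series_dcons psi_le c_itv) (digit_series_dcons psi'B_le q_itv).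
have -> : (h + x + (a : nat)%:R) / B = h / B + y by rewrite /y; field; rewrite natb_neq0.
by rewrite -/y; field; rewrite hn0 natb_neq0.
Qed.

(* By [digit_series_quotient_dcons], the error bound at depth [k.+1] is [q] times
   the one at depth [k], up to a difference quotient error of [psi]: iterating
   makes it geometric in [k]. *)
Let quotient_close k := forall x e, 0 < e -> \forall h \near 0^', forall j,
  `|h^-1 * (Sp (h + x) j - Sp x j) - dSp x j| < e + 2 * L * q ^+ k.

Let quotient_error_step (X Y e : R) k : 0 < e -> 0 <= X -> X < e / 2 ->
  Y < e / 2 + 2 * L * q ^+ k -> X / B + q * Y < e + 2 * L * q ^+ k.+1.
Proof.
move=> e0 X0 Xe Ye; have /andP[_ q1] := q_itv.
have XB : X / B <= X by rewrite ler_pdivrMr ?natb_gt0 // ler_peMr // ltW // natb_gt1.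
have qY : q * Y <= q * (e / 2 + 2 * L * q ^+ k) by rewrite ler_wpM2l // ltW.
have qe : q * (e / 2) <= e / 2 by rewrite ler_piMl ?divr_ge0 ?ltW.
move: qY; rewrite mulrDr exprS mulrCA mulrA (mulrC q); lra.
Qed.

Let quotient_close0 : quotient_close 0.
Proof.
move=> x e e0; near=> h => j.
have hn0 : h != 0 by near: h; exact: nbhs_dnbhs_neq.
apply: (le_lt_trans (ler_normB _ _)).
have : `|h^-1 * (Sp (h + x) j - Sp x j)| <= L.
  rewrite normrM normfV ler_pdivrMl ?normr_gt0 // mulrC.
  by have := Sp_lipschitz (h + x) x j; rewrite addrK.
have := digit_series_le psi'B_le q_itv x j; rewrite expr0 mulr1; lra.
Unshelve. all: by end_near.
Qed.

Let quotient_closeS k : quotient_close k -> quotient_close k.+1.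
Proof.
move=> IH x e e0.
pose y (a : 'I_b) := (x + (a : nat)%:R) / B.
pose P (a : 'I_b) (d : R) :=
  `|d^-1 * (psi (d + y a) - psi (y a)) - psi' (y a)| < e / 2 /\
  forall s, `|d^-1 * (Sp (d + y a) s - Sp (y a) s) - dSp (y a) s| < e / 2 + 2 * L * q ^+ k.
have near_digit (a : 'I_b) : \forall h \near 0^', P a (h / B).
  apply: (near_dnbhs0_divr (P := P a) natb_gt0).
  have [dpsi dv] := psi_der (y a).
  have /cvgrPdist_lt /(_ (e / 2) (ltac:(lra))) {}dpsi : (fun d : R =>
      d^-1 *: (psi (d *: 1 + y a) - psi (y a))) @ 0^' --> psi' (y a).
    by rewrite -dv; exact: dpsi.
  apply: filterS2 dpsi (IH (y a) (e / 2) (ltac:(lra))) => d A1 A2; split => //.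
  by move: A1; rewrite distrC [_%:A]mulr1.
have near_all := filter_forall _ near_digit.
near=> h.
have Ph : forall a, P a (h / B) by near: h; exact: near_all.
have hn0 : h != 0 by near: h; exact: nbhs_dnbhs_neq.
move=> j; have [A1 A2] := Ph (j 0%N).
rewrite -(dcons_eta j) (digit_series_quotient_dcons _ _ _ hn0) -/(y (j 0%N)).
apply: le_lt_trans (ler_normD _ _) _.
rewrite normrM normfV (gtr0_norm natb_gt0) normrM (ger0_norm q_ge0).
exact: quotient_error_step e0 (normr_ge0 _) A1 (A2 _).
Unshelve. all: by end_near.
Qed.

Lemma digit_series_is_derive x j :
  is_derive x (1 : R) (fun t => Sp t j) (dSp x j).
Proof.
have close k : quotient_close k.
  by elim: k => [|k]; [exact: quotient_close0 | exact: quotient_closeS].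
have cv : (fun h : R => h^-1 *: (Sp (h *: 1 + x) j - Sp x j)) @ 0^' --> dSp x j.
  apply/cvgrPdist_lt => e e0.
  have [k hk] := geometric_lt (2 * L) q_itv (ltac:(lra) : 0 < e / 2).
  have := close k x (e / 2) (ltac:(lra)); apply: filterS => h /(_ j).
  rewrite /= [_%:A]mulr1 distrC; lra.
apply: DeriveDef; first by apply/cvg_ex; exists (dSp x j).
by rewrite /derive; exact: cvg_lim cv.
Qed.

End Derivative.

End DigitSeries.

Section Rigidity.
Variables (R : realType) (b : nat) (gamma : R) (phi : R -> R).
Hypotheses (b_gt1 : (1 < b)%N) (gamma_gt0 : 0 < gamma) (gamma_lt1 : gamma < 1).
Hypotheses (phi_an : real_analytic phi) (phi_per : Zperiodic phi).
Hypothesis phi_H : condH b gamma phi.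
Local Notation B := (b%:R : R).
Local Notation phi' := (derive1 phi).
Local Notation phi'B := (fun u => phi' u / B).
Local Notation q := (gamma / B).

Let gamma_itv : 0 <= gamma < 1. Proof. by rewrite ltW. Qed.
Let q_neq0 : q != 0. Proof. by rewrite mulf_neq0 ?invr_eq0 ?natb_neq0 // gt_eqF. Qed.

Let phi_bounded : exists M, forall x, `|phi x| <= M.
Proof. exact: Zperiodic_bounded (real_analytic_continuous phi_an) phi_per. Qed.

Let phi'_an : real_analytic phi'. Proof. exact: real_analytic_derive1. Qed.
Let phi'_per : Zperiodic phi'. Proof. exact: Zperiodic_derive1. Qed.

Let phi'B_bounded : exists M', forall x, `|phi'B x| <= M'.
Proof.
have [M' hM'] := Zperiodic_bounded (real_analytic_continuous phi'_an) phi'_per.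
exists (M' / B) => x.
by rewrite normrM normfV (gtr0_norm (natb_gt0 _ b_gt1)) ler_pM2r ?invr_gt0 ?natb_gt0.
Qed.

Lemma S_digit_series : S b gamma phi = digit_series phi gamma. Proof. by []. Qed.

Definition Sder x (j : nat -> 'I_b) := digit_series phi'B q x j.

Lemma S_is_derive x j : is_derive x (1 : R) (fun t => S b gamma phi t j) (Sder x j).
Proof.
have [M hM] := phi_bounded.
have [M' hM'] := Zperiodic_bounded (real_analytic_continuous phi'_an) phi'_per.
have := real_analytic_is_derive phi_an.
by move/(digit_series_is_derive b_gt1 hM hM')/(_ gamma_itv x j).
Qed.

Lemma S'_Sder x j : S' b gamma phi x j = Sder x j.
Proof. exact: derive1_val (S_is_derive x j). Qed.

Lemma Sder_dcons x a s : Sder x (dcons a s) =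
  phi' ((x + (a : nat)%:R) / B) / B + q * Sder ((x + (a : nat)%:R) / B) s.
Proof.
have [M' hM'] := phi'B_bounded.
exact: (@digit_series_dcons _ _ b_gt1 phi'B _ _ hM' (divB_itv b_gt1 gamma_itv)).
Qed.

Lemma Sder_lipschitz : exists L, forall u v j, `|Sder u j - Sder v j| <= L * `|u - v|.
Proof.
have [M' hM'] := phi'B_bounded.
have [M'' hM''] := Zperiodic_bounded
  (real_analytic_continuous (real_analytic_derive1 phi'_an)) (Zperiodic_derive1 phi'_per).
have M''0 : 0 <= M'' / B.
  by rewrite divr_ge0 ?(le_trans (normr_ge0 _) (hM'' 0)) ?ltW ?natb_gt0.
exists (M'' / B / B / (1 - q / B)).
apply: (@digit_series_lipschitz _ _ b_gt1 phi'B _ _ hM' (divB_itv b_gt1 gamma_itv) _ M''0).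
move=> u v; rewrite -mulrBl normrM normfV (gtr0_norm (natb_gt0 _ b_gt1)) mulrAC.
rewrite ler_pM2r ?invr_gt0 ?natb_gt0 //.
exact: lipschitz_bounded_derive (real_analytic_is_derive phi'_an) hM'' u v.
Qed.

Lemma Sder_add1 x i : Sder (x + 1) i = Sder x (odometer i).
Proof. by apply: digit_series_add1 => // u; rewrite /= phi'_per. Qed.

Lemma Sder_wconcat w x : exists y, forall i j,
  Sder x (wconcat w i) - Sder x (wconcat w j) = q ^+ size w * (Sder y i - Sder y j).
Proof.
elim: w x => [|a w IH] x; first by exists x => i j; rewrite !wconcat_nil expr0 mul1r.
have [y hy] := IH ((x + (a : nat)%:R) / B).
exists y => i j; rewrite !wconcat_cons !Sder_dcons /= exprS -(mulrA q) -hy.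
by rewrite opprD addrACA subrr add0r mulrBr.
Qed.

Definition rigid y := forall i j : nat -> 'I_b, Sder y i = Sder y j.

Lemma rigid_dcons y (a : 'I_b) : rigid y -> rigid ((y + (a : nat)%:R) / B).
Proof.
move=> ry i j; have := ry (dcons a i) (dcons a j).
by rewrite !Sder_dcons => /addrI /(mulfI q_neq0).
Qed.

Lemma rigid_add1 y : rigid y -> rigid (y + 1).
Proof. by move=> ry i j; rewrite !Sder_add1. Qed.

Lemma rigid_sub1 y : rigid y -> rigid (y - 1).
Proof.
move=> ry i j; rewrite -(odometer_predK b_gt1 i) -(odometer_predK b_gt1 j).
by rewrite -!Sder_add1 subrK.
Qed.

Lemma rigid_shift y (k : int) n : rigid y -> rigid ((y + k%:~R) / B ^+ n).
Proof.
move=> /(int_shift_closed rigid_add1 rigid_sub1 k); set z := y + _.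
elim: n => [|n IH] rz; first by rewrite expr0 divr1.
have := rigid_dcons (Ordinal (ltnW b_gt1)) (IH rz); rewrite /= addr0.
by rewrite exprSr invfM mulrA.
Qed.

Lemma rigid_everywhere y : rigid y -> forall t, rigid t.
Proof.
move=> ry t i j; apply/eqP; rewrite -subr_eq0 -normr_le0.
have [L hL] := Sder_lipschitz.
have L0 : 0 <= L by have := hL 1 0 i; rewrite subr0 normr1 mulr1; exact: le_trans.
have Binv : 0 <= B^-1 < 1.
  by rewrite invr_ge0 ltW ?natb_gt0 //= invf_lt1 ?natb_gt0 ?natb_gt1.
apply/ler_addgt0Pr => e e0; rewrite add0r.
have [k hk] := geometric_lt (2 * L) Binv e0.
have [m /andP[d0 d1]] := floor_shift_approx t y (exprn_gt0 k (natb_gt0 _ b_gt1)).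
have rt' := rigid_shift m k ry; set t' := (y + _) / _ in d0 d1 rt'.
have -> : Sder t i - Sder t j = (Sder t i - Sder t' i) - (Sder t j - Sder t' j).
  by rewrite (rt' i j) opprB addrA subrK.
have close : L * `|t - t'| <= L * B^-1 ^+ k by rewrite ger0_norm // ler_wpM2l // exprVn ltW.
apply: le_trans (ler_normB _ _) _; apply: le_trans (lerD (hL t t' i) (hL t t' j)) _.
apply: le_trans (lerD close close) _.
by move: hk; rewrite -mulrA mulr_natl mulr2n => /ltW.
Qed.

Lemma not_everywhere_rigid : ~ (forall t, rigid t).
Proof.
move=> rigid_all.
pose zero : 'I_b := Ordinal (ltnW b_gt1); pose one : 'I_b := Ordinal b_gt1.
pose s : nat -> 'I_b := fun=> zero.
pose D x := S b gamma phi x (dcons zero s) - S b gamma phi x (dcons one s).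
have Dcst x : D x = D 0.
  apply: is_derive_0_is_cst => {}x.
  rewrite -(subrr (Sder x (dcons zero s))) {2}(rigid_all x (dcons zero s) (dcons one s)).
  exact: is_deriveB (S_is_derive x _) (S_is_derive x _).
have [M hM] := phi_bounded.
have shift x : S b gamma phi x (dcons one s) = S b gamma phi (x + 1) (dcons zero s).
  by rewrite !S_digit_series !(digit_series_dcons b_gt1 hM gamma_itv) /= addr0.
have D0 : D 0 = 0.
  apply: (@bounded_constant_step_eq0 _ (fun x => S b gamma phi x (dcons zero s))
    (M / (1 - gamma))).
    by move=> x; rewrite S_digit_series; exact: digit_series_le hM gamma_itv x _.
  by move=> x; rewrite -shift -/(D x) Dcst.
apply: (@phi_H (dcons one s) (dcons zero s)).
  by move=> /(congr1 (fun f => val (f 0%N))).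
by move=> x; rewrite -/(D x) Dcst D0.
Qed.

Lemma Sder_wconcat_neq w x : exists i j, Sder x (wconcat w i) != Sder x (wconcat w j).
Proof.
have [y hy] := Sder_wconcat w x.
have [/rigid_everywhere/not_everywhere_rigid //|] := pselect (rigid y).
move=> /existsNP[i /existsNP[j /eqP neq]]; exists i, j.
by rewrite -subr_eq0 hy mulf_eq0 expf_eq0 (negbTE q_neq0) andbF subr_eq0.
Qed.

End Rigidity.

Unset Implicit Arguments.
Set Strict Implicit.

Theorem lemma6p3 (R : realType) (b : nat) (gamma : R) (phi : R -> R)
  (alpha : R)
  (hb : (2 <= b)%N) (hg0 : 0 < gamma) (hg1 : gamma < 1)
  (han : real_analytic phi) (hper : Zperiodic phi)
  (hH : condH b gamma phi)
  (halpha : {ae (@lebesgue_measure R), forall x,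
              exact_dimensional (mx b gamma phi x) alpha})
  (hlt : alpha < Num.min 1 (ln (b%:R : R) / ln (gamma^-1))) :
  forall v w : seq 'I_b, (0 < size v)%N -> (0 < size w)%N ->
    exists i j : nat -> 'I_b, i <> j /\
      exists2 x : R, Iv v x &
        S' b gamma phi x (wconcat w i) - S' b gamma phi x (wconcat w j) != 0.
Proof.
move=> v w _ _.
pose x := wval R v / (b%:R : R) ^+ size v.
have [i [j neq]] := Sder_wconcat_neq hb hg0 hg1 han hper hH w x.
exists i, j; split; first by move=> eij; rewrite eij eqxx in neq.
exists x; last by rewrite !(S'_Sder hb hg0 hg1 han hper) subr_eq0.
have Bv : 0 < (b%:R : R) ^+ size v by rewrite exprn_gt0 // natb_gt0.
by rewrite /Iv /x /= lexx /= ltr_pM2r ?invr_gt0 // ltrDr.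
Qed.
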